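(* Let $(G,J,g)$ be a $2$-step nilpotent Lie group equipped with a left-invariant Hermitian structure $(J,g)$, with Lie algebra $(\mathfrak g,\mu)$, and assume that $J\mu(\mathfrak g,\mathfrak g)$ is contained in the center of $\mathfrak g$. Then, with respect to any left-invariant, $g$-unitary $(1,0)$-frame $\{Z_1,\dots,Z_n\}$ on $G$ (with $Z_{\bar j}=\overline{Z_j}$), and summing over repeated indices $r,s$, $$\Theta(g)(Z_j,Z_{\bar k})=g\big(\mu(Z_s,Z_{\bar r})^{0,1},Z_j\big)\,g\big(\mu(Z_{\bar s},Z_r)^{1,0},Z_{\bar k}\big)+\tfrac12\,g\big(\mu(Z_{\bar s},Z_{\bar r}),Z_j\big)\,g\big(\mu(Z_s,Z_r),Z_{\bar k}\big).$$
   Context: $g$, $J$, $\mu$ are extended complex (bi)linearly to $\mathfrak g\otimes\mathbb C=\mathfrak g^{1,0}\oplus\mathfrak g^{0,1}$, and $X^{1,0},X^{0,1}$ denote the components of $X$. For the Hermitian metric $g$ with Chern connection $\nabla$ (the unique connection preserving $g$ and $J$ whose torsion has vanishing $(1,1)$-part), curvature $\Omega$ and torsion $T$ with $T_{js\bar p}=g_{l\bar p}T^l_{js}$, set $S(g)_{j\bar k}=g^{\bar rs}\Omega_{s\bar rj\bar k}$, $Q^2(g)_{j\bar k}=g^{\bar pq}g^{\bar rs}T_{sq\bar k}T_{\overline{rp}j}$ and $\Theta(g)=S(g)+\frac12 Q^2(g)$. *)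

From HB Require Import structures.
From mathcomp Require Import all_boot all_order all_algebra.
From mathcomp Require Export complex.
Set Implicit Arguments. Unset Strict Implicit. Unset Printing Implicit Defensive.
Import Order.TTheory GRing.Theory Num.Theory.
Local Open Scope ring_scope.

(* A bilinear map g x g -> g is encoded by its values on the
   standard basis: c i j = B(e_i, e_j).  Endomorphisms are matrices acting
   on the right (x |-> x *m J); bilinear forms are matrices
   (x, y) |-> x *m G *m y^T.  Over the complexification these formulas give
   exactly the complex (bi)linear extensions. *)
Section Generic.
Variables (K : comUnitRingType) (d : nat).

Definition bil (c : 'I_d -> 'I_d -> 'rV[K]_d) (x y : 'rV[K]_d) : 'rV[K]_d :=
  \sum_(i < d) \sum_(j < d) (x 0 i * y 0 j) *: c i j.

Definition form (G : 'M[K]_d) (x y : 'rV[K]_d) : K := (x *m G *m y^T) 0 0.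

Definition actJ (J : 'M[K]_d) (x : 'rV[K]_d) : 'rV[K]_d := x *m J.
End Generic.

Section Real.
Variables (R : rcfType) (d : nat).
Implicit Types (c : 'I_d -> 'I_d -> 'rV[R]_d) (J G : 'M[R]_d).

Definition is_lie_bracket c :=
  (forall x y, bil c x y = - bil c y x) /\
  (forall x y z, bil c (bil c x y) z + bil c (bil c y z) x
                 + bil c (bil c z x) y = 0).

Definition two_step_nilpotent c :=
  (forall x y z, bil c (bil c x y) z = 0) /\ (exists x y, bil c x y != 0).

Definition in_center c (z : 'rV[R]_d) := forall y, bil c z y = 0.

(* integrable (Nijenhuis tensor vanishes) almost complex structure *)
Definition is_complex_structure c J :=
  J *m J = - 1%:M /\
  (forall x y, bil c (actJ J x) (actJ J y) - actJ J (bil c (actJ J x) y)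
               - actJ J (bil c x (actJ J y)) - bil c x y = 0).

Definition is_hermitian_metric J G :=
  G^T = G /\ (forall x : 'rV[R]_d, x != 0 -> 0 < form G x x) /\
  (forall x y, form G (actJ J x) (actJ J y) = form G x y).
End Real.

Section Complexified.
Variables (R : rcfType) (d : nat).
Local Notation C := (R[i]).
Local Open Scope complex_scope.

Definition cplx (x : R) : C := x%:C.
Definition cplx_mx m n (A : 'M[R]_(m, n)) : 'M[C]_(m, n) := map_mx cplx A.
Definition cplx_bil (c : 'I_d -> 'I_d -> 'rV[R]_d) : 'I_d -> 'I_d -> 'rV[C]_d :=
  fun i j => cplx_mx (c i j).
Definition conjv (X : 'rV[C]_d) : 'rV[C]_d := map_mx (fun z : C => z^*) X.

Variables (c Gam : 'I_d -> 'I_d -> 'rV[R]_d) (J G : 'M[R]_d).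

Definition muC := bil (cplx_bil c).
Definition JC := actJ (cplx_mx J).
Definition gC := form (cplx_mx G).
(* left-invariant connection nabla_X Y (real bilinear, extended C-bilinearly) *)
Definition nablaC := bil (cplx_bil Gam).

Definition p10 (X : 'rV[C]_d) : 'rV[C]_d := 2^-1 *: (X - 'i *: JC X).
Definition p01 (X : 'rV[C]_d) : 'rV[C]_d := 2^-1 *: (X + 'i *: JC X).

Definition torsionC X Y := nablaC X Y - nablaC Y X - muC X Y.
Definition curvC X Y W :=
  nablaC X (nablaC Y W) - nablaC Y (nablaC X W) - nablaC (muC X Y) W.

Definition is_chern_connection :=
  (forall x y z : 'rV[R]_d,
      form G (bil Gam x y) z + form G y (bil Gam x z) = 0) /\
  (forall x y : 'rV[R]_d, bil Gam x (actJ J y) = actJ J (bil Gam x y)) /\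
  (forall X Y : 'rV[C]_d, torsionC (p10 X) (p01 Y) = 0).
End Complexified.

Section Theta.
Variables (R : rcfType) (n : nat).
Local Notation C := (R[i]).
Local Notation d := (n.*2).
Variables (c Gam : 'I_d -> 'I_d -> 'rV[R]_d) (J G : 'M[R]_d)
          (Z : 'I_n -> 'rV[C]_d).

Definition is_10_frame :=
  forall j, JC J (Z j) = (Complex 0 1) *: Z j.
Definition is_unitary_frame :=
  forall j k, gC G (Z j) (conjv (Z k)) = (j == k)%:R.

Local Notation g := (gC G).
Local Notation Zb k := (conjv (Z k)).

(* g_{s \bar t} and its inverse g^{\bar t s} = ginv t s *)
Definition gmat : 'M[C]_n := \matrix_(s, t) g (Z s) (Zb t).
Definition ginv : 'M[C]_n := invmx gmat.

(* Omega_{a \bar b c \bar e} = g(Omega(Z_a, Z_{\bar b}) Z_c, Z_{\bar e}) *)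
Definition OmegaC a b c' e :=
  g (curvC c Gam (Z a) (Zb b) (Z c')) (Zb e).
(* T_{a b \bar e} = g(T(Z_a,Z_b), Z_{\bar e}) and its conjugate-type version *)
Definition Tlow a b e := g (torsionC c Gam (Z a) (Z b)) (Zb e).
Definition Tlowbar a b e := g (torsionC c Gam (Zb a) (Zb b)) (Z e).

Definition S_chern j k := \sum_(r < n) \sum_(s < n) ginv r s * OmegaC s r j k.
Definition Q2 j k :=
  \sum_(p < n) \sum_(q < n) \sum_(r < n) \sum_(s < n)
     ginv p q * ginv r s * Tlow s q k * Tlowbar r p j.
Definition Theta j k := S_chern j k + 2^-1 * Q2 j k.
End Theta.

From Pilot Require Import Defs.
From HB Require Import structures.
From mathcomp Require Import all_boot all_order all_algebra.
From mathcomp Require Import complex ring.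
Import Order.TTheory GRing.Theory Num.Theory.
Local Open Scope ring_scope.

(* In a unitary (1,0)-frame the inverse Gram matrix is the identity, so Theta
   is a sum of torsion and curvature components of the Chern connection.
   Metric compatibility, nabla J = 0 and the vanishing of the (1,1)-torsion
   give nabla_W Y = [W, Y]^{1,0} and nabla_Y W = [Y, W]^{0,1} for Y of type
   (1,0) and W of type (0,1), and metric compatibility determines the other
   components; this expresses every component through the structure
   constants of mu in the frame.  Since mu(g, g) and J mu(g, g) are central,
   the type components of any bracket are central: this kills the term
   nabla_{[Z_r, Z_rbar]} of the curvature and all cross terms of Q^2, leaving
   the stated formula.  The real hypotheses pass to the complexification
   because both sides of each identity are multilinear and agree on the
   standard basis, which is real. *)

Section Multilinear.
Variables (K : comUnitRingType) (d : nat).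
Local Notation V := 'rV[K]_d.

Lemma bil_is_bilinear (c : 'I_d -> 'I_d -> V) :
  bilinear_for (GRing.Scale.Law.clone _ _ *:%R _)
    (GRing.Scale.Law.clone _ _ *:%R _) (bil c).
Proof.
split=> [y|x] a u v /=; rewrite /bil scaler_sumr -big_split; apply: eq_bigr => i _;
  rewrite scaler_sumr -big_split; apply: eq_bigr => j _; rewrite !mxE scalerA.
  by rewrite mulrDl scalerDl mulrA.
by rewrite mulrDr scalerDl mulrCA.
Qed.

HB.instance Definition _ (c : 'I_d -> 'I_d -> V) :=
  bilinear_isBilinear.Build K V V V _ _ (bil c) (bil_is_bilinear c).

Lemma form_is_bilinear (G : 'M[K]_d) :
  bilinear_for (GRing.Scale.Law.clone _ _ *%R _)
    (GRing.Scale.Law.clone _ _ *%R _) (Defs.form G).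
Proof.
split=> [y|x] a u v /=; rewrite /Defs.form.
  by rewrite !mulmxDl -!scalemxAl !mxE.
by rewrite linearP /= mulmxDr -scalemxAr !mxE.
Qed.

HB.instance Definition _ (G : 'M[K]_d) :=
  bilinear_isBilinear.Build K V V K _ _ (Defs.form G) (form_is_bilinear G).

Lemma actJ_is_linear (J : 'M[K]_d) : linear (actJ J).
Proof. by move=> a u v; rewrite /actJ mulmxDl scalemxAl. Qed.

HB.instance Definition _ (J : 'M[K]_d) :=
  GRing.isLinear.Build K V V _ (actJ J) (actJ_is_linear J).

Lemma form_sym (G : 'M[K]_d) x y : G^T = G -> Defs.form G x y = Defs.form G y x.
Proof.
move=> symG; rewrite /Defs.form.
have -> : (x *m G *m y^T) 0 0 = (x *m G *m y^T)^T 0 0 by rewrite [RHS]mxE.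
by rewrite !trmx_mul trmxK symG mulmxA.
Qed.

Lemma form_row_mx m p (A : 'M[K]_(m, d)) (G : 'M[K]_d) (B : 'M[K]_(p, d)) i j :
  (A *m G *m B^T) i j = Defs.form G (row i A) (row j B).
Proof.
rewrite /Defs.form !mxE; apply: eq_bigr => k _; rewrite !mxE; congr (_ * _).
by apply: eq_bigr => l _; rewrite !mxE.
Qed.

Lemma linear_eq0_basis {W : lmodType K} (F : V -> W) :
  linear F -> (forall i, F 'e_i = 0) -> forall x, F x = 0.
Proof.
move=> linF F_basis x.
pose f : {linear V -> W} := HB.pack F (GRing.isLinear.Build K V W _ F linF).
transitivity (f x) => //; rewrite (row_sum_delta x) linear_sum big1 // => i _.
by rewrite linearZ /= F_basis scaler0.
Qed.

Lemma bilinear_eq0_basis {W : lmodType K} (F : V -> V -> W) :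
  (forall y, linear (F^~ y)) -> (forall x, linear (F x)) ->
  (forall i j, F 'e_i 'e_j = 0) -> forall x y, F x y = 0.
Proof.
move=> linFl linFr F_basis x y; apply: (linear_eq0_basis _ (linFl y)) => i.
exact: linear_eq0_basis _ (linFr _) (F_basis i) y.
Qed.

Lemma trilinear_eq0_basis {W : lmodType K} (F : V -> V -> V -> W) :
  (forall y z, linear (fun x => F x y z)) -> (forall x z, linear (F x ^~ z)) ->
  (forall x y, linear (F x y)) ->
  (forall i j l, F 'e_i 'e_j 'e_l = 0) ->
  forall x y z, F x y z = 0.
Proof.
move=> linF1 linF2 linF3 F_basis x y z; apply: (linear_eq0_basis _ (linF1 y z)) => i.
exact: bilinear_eq0_basis _ (linF2 _) (linF3 _) (F_basis i) y z.
Qed.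

Lemma scalar_bilinear_eq0_basis (F : V -> V -> K) :
  (forall y, scalar (F^~ y)) -> (forall x, scalar (F x)) ->
  (forall i j, F 'e_i 'e_j = 0) -> forall x y, F x y = 0.
Proof. exact: (@bilinear_eq0_basis K^o). Qed.

Lemma scalar_trilinear_eq0_basis (F : V -> V -> V -> K) :
  (forall y z, scalar (fun x => F x y z)) -> (forall x z, scalar (F x ^~ z)) ->
  (forall x y, scalar (F x y)) ->
  (forall i j l, F 'e_i 'e_j 'e_l = 0) -> forall x y z, F x y z = 0.
Proof. exact: (@trilinear_eq0_basis K^o). Qed.
End Multilinear.

Section Complexification.
Variables (R : rcfType) (d : nat).
Local Notation C := R[i].
Local Notation V := 'rV[C]_d.
Implicit Types (a : C) (x y : 'rV[R]_d) (X Y : V) (c Gam : 'I_d -> 'I_d -> 'rV[R]_d).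
Implicit Types (J G : 'M[R]_d).

HB.instance Definition _ := GRing.RMorphism.copy (@cplx R) (real_complex R).
HB.instance Definition _ c := Bilinear.copy (muC c) (bil (cplx_bil c)).
HB.instance Definition _ Gam := Bilinear.copy (nablaC Gam) (bil (cplx_bil Gam)).
HB.instance Definition _ G := Bilinear.copy (gC G) (Defs.form (cplx_mx G)).
HB.instance Definition _ J := GRing.Linear.copy (JC J) (actJ (cplx_mx J)).

Lemma p10_is_linear J : linear (p10 J).
Proof.
move=> a X Y; rewrite /p10 linearP /= scalerA mulrC -scalerA -scalerDr; congr (_ *: _).
by rewrite scalerDr opprD addrACA scalerBr !scalerA [a * _]mulrC.
Qed.

Lemma p01_is_linear J : linear (p01 J).
Proof.
move=> a X Y; rewrite /p01 linearP /= scalerA mulrC -scalerA -scalerDr; congr (_ *: _).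
by rewrite scalerDr addrACA scalerDr !scalerA [a * _]mulrC.
Qed.

HB.instance Definition _ J := GRing.isLinear.Build C V V _ (p10 J) (p10_is_linear J).
HB.instance Definition _ J := GRing.isLinear.Build C V V _ (p01 J) (p01_is_linear J).

Lemma cplx_mx_bil c x y :
  cplx_mx (bil c x y) = bil (cplx_bil c) (cplx_mx x) (cplx_mx y).
Proof.
apply/rowP => k; rewrite /bil !mxE !summxE rmorph_sum; apply: eq_bigr => i _.
by rewrite !summxE rmorph_sum; apply: eq_bigr => j _; rewrite !mxE !rmorphM.
Qed.

Lemma cplx_mx_actJ J x : cplx_mx (actJ J x) = JC J (cplx_mx x).
Proof. exact: map_mxM. Qed.

Lemma cplx_form G x y : cplx (Defs.form G x y) = gC G (cplx_mx x) (cplx_mx y).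
Proof. by rewrite /gC /Defs.form /cplx_mx map_trmx -!map_mxM [RHS]mxE. Qed.

Lemma cplx_mx_delta (i : 'I_d) : cplx_mx ('e_i : 'rV[R]_d) = 'e_i.
Proof. by apply/rowP => k; rewrite !mxE; case: (_ && _). Qed.

Lemma cplx_mx_opp x : cplx_mx (- x) = - cplx_mx x.
Proof. exact: map_mxN. Qed.

Lemma conjvZ a X : conjv (a *: X) = a^*%C *: conjv X.
Proof. by apply/rowP => k; rewrite !mxE rmorphM. Qed.

Lemma conjv_JC J X : conjv (JC J X) = JC J (conjv X).
Proof.
apply/rowP => k; rewrite !mxE rmorph_sum; apply: eq_bigr => i _.
by rewrite !mxE rmorphM; congr (_ * _); apply: conjc_real.
Qed.

Lemma cplx_mx0 : cplx_mx (0 : 'rV[R]_d) = 0.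
Proof. exact: map_mx0. Qed.

Lemma muC_antisym c : (forall x y, bil c x y = - bil c y x) ->
  forall X Y, muC c X Y = - muC c Y X.
Proof.
move=> anti X Y; apply/eqP; rewrite -addr_eq0; apply/eqP; move: X Y.
apply: (@bilinear_eq0_basis _ _ _ (fun X Y => muC c X Y + muC c Y X))
  => [Y a X1 X2|X a Y1 Y2|i j] /=.
- by rewrite linearPl linearPr scalerDr addrACA.
- by rewrite linearPl linearPr scalerDr addrACA.
- by rewrite /muC -!cplx_mx_delta -!cplx_mx_bil anti cplx_mx_opp addNr.
Qed.

Lemma muC_bracket_l c : (forall x y z, bil c (bil c x y) z = 0) ->
  forall X Y W, muC c (muC c X Y) W = 0.
Proof.
move=> nil; apply: (@trilinear_eq0_basis _ _ _ (fun X Y W => muC c (muC c X Y) W))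
  => [Y W a X1 X2|X W a Y1 Y2|X Y a W1 W2|i j l] /=.
- by rewrite !linearPl.
- by rewrite linearPr linearPl.
- by rewrite linearPr.
- by rewrite /muC -!cplx_mx_delta -!cplx_mx_bil nil cplx_mx0.
Qed.

Lemma muC_JC_bracket_l c J : (forall x y, in_center c (actJ J (bil c x y))) ->
  forall X Y W, muC c (JC J (muC c X Y)) W = 0.
Proof.
move=> cen; apply: (@trilinear_eq0_basis _ _ _ (fun X Y W => muC c (JC J (muC c X Y)) W))
  => [Y W a X1 X2|X W a Y1 Y2|X Y a W1 W2|i j l] /=.
- by rewrite linearPl linearP linearPl.
- by rewrite linearPr linearP linearPl.
- by rewrite linearPr.
- rewrite /muC -!cplx_mx_delta -!cplx_mx_bil -cplx_mx_actJ -cplx_mx_bil.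
  by rewrite cen cplx_mx0.
Qed.

Lemma JC_sqr J : J *m J = - 1%:M -> forall X, JC J (JC J X) = - X.
Proof.
move=> JJ X; rewrite /JC /actJ /cplx_mx -mulmxA -map_mxM JJ map_mxN map_mx1.
by rewrite mulmxN mulmx1.
Qed.

Lemma gC_sym G : G^T = G -> forall X Y, gC G X Y = gC G Y X.
Proof. by move=> symG X Y; apply: form_sym; rewrite /cplx_mx map_trmx symG. Qed.

Lemma gC_JC J G :
  (forall x y, Defs.form G (actJ J x) (actJ J y) = Defs.form G x y) ->
  forall X Y, gC G (JC J X) (JC J Y) = gC G X Y.
Proof.
move=> GJ X Y; apply/eqP; rewrite -subr_eq0; apply/eqP; move: X Y.
apply: (@scalar_bilinear_eq0_basis _ _ (fun X Y => gC G (JC J X) (JC J Y) - gC G X Y))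
  => [Y a X1 X2|X a Y1 Y2|i j] /=.
- by rewrite linearP !linearPl mulrBr opprD addrACA.
- by rewrite linearP !linearPr mulrBr opprD addrACA.
- by rewrite -!cplx_mx_delta -!cplx_mx_actJ -!cplx_form GJ subrr.
Qed.

Lemma nablaC_metric Gam G :
  (forall x y z, Defs.form G (bil Gam x y) z + Defs.form G y (bil Gam x z) = 0) ->
  forall X Y W, gC G (nablaC Gam X Y) W + gC G Y (nablaC Gam X W) = 0.
Proof.
move=> met.
apply: (@scalar_trilinear_eq0_basis _ _
          (fun X Y W => gC G (nablaC Gam X Y) W + gC G Y (nablaC Gam X W)))
  => [Y W a X1 X2|X W a Y1 Y2|X Y a W1 W2|i j l] /=.
- by rewrite !linearPl linearPr mulrDr addrACA.
- by rewrite linearPr !linearPl mulrDr addrACA.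
- by rewrite !linearPr mulrDr addrACA.
- by rewrite /nablaC -!cplx_mx_delta -!cplx_mx_bil -!cplx_form -rmorphD met.
Qed.

Lemma nablaC_JC Gam J :
  (forall x y, bil Gam x (actJ J y) = actJ J (bil Gam x y)) ->
  forall X Y, nablaC Gam X (JC J Y) = JC J (nablaC Gam X Y).
Proof.
move=> GamJ X Y; apply/eqP; rewrite -subr_eq0; apply/eqP; move: X Y.
apply: (@bilinear_eq0_basis _ _ _
          (fun X Y => nablaC Gam X (JC J Y) - JC J (nablaC Gam X Y)))
  => [Y a X1 X2|X a Y1 Y2|i j] /=.
- by rewrite !linearPl linearP scalerBr opprD addrACA.
- by rewrite linearP !linearPr linearP scalerBr opprD addrACA.
- rewrite /nablaC -!cplx_mx_delta -cplx_mx_actJ -!cplx_mx_bil -cplx_mx_actJ.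
  by rewrite GamJ subrr.
Qed.
End Complexification.

Lemma sum_torsion_square (T : comRingType) (I : finType) (A Ab B Bb : I -> I -> T) :
  \sum_r \sum_p A p r * Ab r p = 0 -> \sum_r \sum_p A p r * Bb r p = 0 ->
  \sum_r \sum_p A r p * Bb r p = 0 -> \sum_r \sum_p B r p * Ab p r = 0 ->
  \sum_r \sum_p B r p * Ab r p = 0 ->
  \sum_r \sum_p (A p r - A r p - B r p) * (Ab p r - Ab r p - Bb r p)
    = (\sum_r \sum_p A r p * Ab r p) *+ 2 + \sum_r \sum_p B r p * Bb r p.
Proof.
move=> AAb ABb ABb' BAb BAb'.
have AAb' : \sum_r \sum_p A r p * Ab p r = 0 by rewrite exchange_big.
have AAb_swap : \sum_r \sum_p A p r * Ab p r = \sum_r \sum_p A r p * Ab r p.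
  exact: exchange_big.
have sum2D (F H : I -> I -> T) :
    \sum_r \sum_p (F r p + H r p) = \sum_r \sum_p F r p + \sum_r \sum_p H r p.
  by rewrite -big_split; apply: eq_bigr => r _; rewrite big_split.
have sum2N (F : I -> I -> T) : \sum_r \sum_p - F r p = - \sum_r \sum_p F r p.
  by rewrite -sumrN; apply: eq_bigr => r _; rewrite sumrN.
transitivity (\sum_r \sum_p (A p r * Ab p r + A r p * Ab r p + B r p * Bb r p
   - (A p r * Ab r p + A p r * Bb r p + A r p * Ab p r + B r p * Ab p r)
   + (A r p * Bb r p + B r p * Ab r p))).
  by apply: eq_bigr => r _; apply: eq_bigr => p _; ring.
rewrite !(sum2D, sum2N) AAb ABb ABb' BAb BAb' AAb' AAb_swap.
by rewrite !addr0 oppr0 addr0 mulr2n.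
Qed.

Lemma sum_mx1_mul {T : pzSemiRingType} {m} (F : 'I_m -> T) (r : 'I_m) :
  \sum_s (1%:M : 'M[T]_m) r s * F s = F r.
Proof.
rewrite (bigD1 r) //= mxE eqxx mul1r big1 ?addr0 // => s s_neq_r.
by rewrite mxE eq_sym (negbTE s_neq_r) mul0r.
Qed.

Section ChernFrame.
Variables (R : rcfType) (n : nat).
Local Notation C := R[i].
Local Notation V := 'rV[C]_n.*2.
Variables (c Gam : 'I_n.*2 -> 'I_n.*2 -> 'rV[R]_n.*2) (J G : 'M[R]_n.*2).
Variable Z : 'I_n -> V.
Local Notation mu := (muC c).
Local Notation nab := (nablaC Gam).
Local Notation g := (gC G).
Local Notation JJ := (JC J).
Local Notation P10 := (p10 J).
Local Notation P01 := (p01 J).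
Local Notation Zb k := (conjv (Z k)).

Hypothesis mu_antisym : forall X Y, mu X Y = - mu Y X.
Hypothesis mu_bracket_l : forall X Y W, mu (mu X Y) W = 0.
Hypothesis mu_JJ_bracket_l : forall X Y W, mu (JJ (mu X Y)) W = 0.
Hypothesis JJ_sqr : forall X, JJ (JJ X) = - X.
Hypothesis g_sym : forall X Y, g X Y = g Y X.
Hypothesis g_JJ : forall X Y, g (JJ X) (JJ Y) = g X Y.
Hypothesis nabla_metric : forall X Y W, g (nab X Y) W + g Y (nab X W) = 0.
Hypothesis nabla_JJ : forall X Y, nab X (JJ Y) = JJ (nab X Y).
Hypothesis torsion_10_01 : forall X Y, torsionC c Gam (P10 X) (P01 Y) = 0.
Hypothesis Z_10 : is_10_frame J Z.
Hypothesis Z_unitary : is_unitary_frame G Z.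

Implicit Types (X Y W : V) (a : C).

Definition is10 X := JJ X = 'i%C *: X.
Definition is01 X := JJ X = - 'i%C *: X.

Lemma mulii : 'i%C * 'i%C = -1 :> C.
Proof. by rewrite -expr2 sqr_i. Qed.

Lemma half_addxx X : (2^-1 : C) *: (X + X) = X.
Proof.
have -> : X + X = (2 : C) *: X by rewrite scaler_nat mulr2n.
by rewrite scalerA mulVf ?pnatr_eq0 // scale1r.
Qed.

Lemma p10_id {X} : is10 X -> P10 X = X.
Proof. by move=> X10; rewrite /p10 X10 scalerA mulii scaleN1r opprK half_addxx. Qed.

Lemma p01_id {X} : is01 X -> P01 X = X.
Proof. by move=> X01; rewrite /p01 X01 scalerA mulrN mulii opprK scale1r half_addxx. Qed.

Lemma p10_eq0 {X} : is01 X -> P10 X = 0.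
Proof. by move=> X01; rewrite /p10 X01 scalerA mulrN mulii opprK scale1r subrr scaler0. Qed.

Lemma p01_eq0 {X} : is10 X -> P01 X = 0.
Proof. by move=> X10; rewrite /p01 X10 scalerA mulii scaleN1r subrr scaler0. Qed.

Lemma p10_add_p01 X : P10 X + P01 X = X.
Proof. by rewrite /p10 /p01 -scalerDr addrACA addNr addr0 half_addxx. Qed.

Lemma p10_is10 X : is10 (P10 X).
Proof.
rewrite /is10 /p10 linearZ linearB linearZ /= JJ_sqr scalerA [_ * 2^-1]mulrC -scalerA.
by congr (_ *: _); rewrite scalerBr scalerA mulii scaleN1r opprK scalerN opprK addrC.
Qed.

Lemma p01_is01 X : is01 (P01 X).
Proof.
rewrite /is01 /p01 linearZ linearD linearZ /= JJ_sqr scalerA [_ * 2^-1]mulrC -scalerA.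
by congr (_ *: _); rewrite scalerDr scalerA mulNr mulii opprK scale1r scalerN scaleNr addrC.
Qed.

Lemma g_is10_eq0 {X Y} : is10 X -> is10 Y -> g X Y = 0.
Proof.
move=> X10 Y10; apply/eqP; rewrite -eqNr; apply/eqP.
by rewrite -[RHS]g_JJ X10 Y10 linearZl_LR linearZr_LR /= mulrA mulii mulN1r.
Qed.

Lemma g_is01_eq0 {X Y} : is01 X -> is01 Y -> g X Y = 0.
Proof.
move=> X01 Y01; apply/eqP; rewrite -eqNr; apply/eqP.
by rewrite -[RHS]g_JJ X01 Y01 linearZl_LR linearZr_LR /= mulrA mulrNN mulii mulN1r.
Qed.

Lemma g_p01r {W} X : is10 W -> g W (P01 X) = g W X.
Proof.
by move=> W10; rewrite -{2}(p10_add_p01 X) linearDr /= (g_is10_eq0 W10 (p10_is10 X)) add0r.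
Qed.

Lemma g_p10r {W} X : is01 W -> g W (P10 X) = g W X.
Proof.
by move=> W01; rewrite -{2}(p10_add_p01 X) linearDr /= (g_is01_eq0 W01 (p01_is01 X)) addr0.
Qed.

Lemma g_p01l {W} X : is10 W -> g (P01 X) W = g X W.
Proof. by move=> W10; rewrite g_sym g_p01r // g_sym. Qed.

Lemma g_p10l {W} X : is01 W -> g (P10 X) W = g X W.
Proof. by move=> W01; rewrite g_sym g_p10r // g_sym. Qed.

Lemma Z_is10 k : is10 (Z k).
Proof. exact: Z_10. Qed.

Lemma Zb_is01 k : is01 (Zb k).
Proof.
have conj_i : ('i%C)^*%C = - 'i%C :> C.
  by apply/eqP; rewrite eq_complex /= oppr0 !eqxx.
by rewrite /is01 -conjv_JC Z_is10 conjvZ conj_i.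
Qed.

Lemma frame_expansion X : X = \sum_i g X (Zb i) *: Z i + \sum_i g X (Z i) *: Zb i.
Proof.
pose Zm := \matrix_(i < n, k < n.*2) Z i 0 k.
pose Zbm := \matrix_(i < n, k < n.*2) Zb i 0 k.
have row_Zm i : row i Zm = Z i by apply/rowP => k; rewrite !mxE.
have row_Zbm i : row i Zbm = Zb i by apply/rowP => k; rewrite !mxE.
have row_X : row 0 X = X by apply/rowP => k; rewrite !mxE.
(* The Gram matrix of the frame (Z, Zb) against (Zb, Z) is the identity,
   so the frame matrix B has full rank. *)
pose B := col_mx Zm Zbm.
pose D := cplx_mx G *m (col_mx Zbm Zm)^T.
have BD : B *m D = 1%:M.
  rewrite /B /D tr_col_mx mul_mx_row mul_col_row (scalar_mx_block n n).
  congr block_mx; apply/matrixP => i j; rewrite mulmxA form_row_mx -/(gC G) !mxE ?row_Zm ?row_Zbm.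
  - exact: Z_unitary.
  - exact: g_is10_eq0 (Z_is10 i) (Z_is10 j).
  - exact: g_is01_eq0 (Zb_is01 i) (Zb_is01 j).
  - by rewrite g_sym Z_unitary eq_sym.
have B_full : row_full B.
  have rankB : \rank B = (n + n)%N.
    by apply/eqP; rewrite eqn_leq rank_leq_row -{1}(mxrank1 C (n + n)) -BD mxrankM_maxl.
  by rewrite /row_full rankB addnn.
have /submxP [E XE] : (X <= B)%MS by exact: submx_full.
have XD : X *m D = E by rewrite XE -mulmxA BD mulmx1.
rewrite {1}XE -XD mulmx_sum_row big_split_ord /=.
congr (_ + _); apply: eq_bigr => i _.
- by rewrite rowKu row_Zm /D mulmxA form_row_mx rowKu row_Zbm row_X.
- by rewrite rowKd row_Zbm /D mulmxA form_row_mx rowKd row_Zm row_X.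
Qed.

Lemma p10_frame X : P10 X = \sum_i g X (Zb i) *: Z i.
Proof.
rewrite {1}(frame_expansion X) linearD !linear_sum /= [X in _ + X]big1 ?addr0 => [|i _].
  by apply: eq_bigr => i _; rewrite linearZ_LR /= (p10_id (Z_is10 i)).
by rewrite linearZ_LR /= (p10_eq0 (Zb_is01 i)) scaler0.
Qed.

Lemma p01_frame X : P01 X = \sum_i g X (Z i) *: Zb i.
Proof.
rewrite {1}(frame_expansion X) linearD !linear_sum /= [X in X + _]big1 ?add0r => [|i _].
  by apply: eq_bigr => i _; rewrite linearZ_LR /= (p01_id (Zb_is01 i)).
by rewrite linearZ_LR /= (p01_eq0 (Z_is10 i)) scaler0.
Qed.

Lemma contract10_eq0 (L : V -> C) X :
  scalar L -> L (P10 X) = 0 -> \sum_i L (Z i) * g (Zb i) X = 0.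
Proof.
move=> linL LX0; pose l : {scalar V} := HB.pack L (GRing.isLinear.Build _ _ _ _ L linL).
rewrite -[RHS]LX0 -[L _]/(l _) p10_frame linear_sum; apply: eq_bigr => i _.
by rewrite linearZ /= g_sym mulrC.
Qed.

Lemma contract01_eq0 (L : V -> C) X :
  scalar L -> L (P01 X) = 0 -> \sum_i g (Z i) X * L (Zb i) = 0.
Proof.
move=> linL LX0; pose l : {scalar V} := HB.pack L (GRing.isLinear.Build _ _ _ _ L linL).
rewrite -[RHS]LX0 -[L _]/(l _) p01_frame linear_sum; apply: eq_bigr => i _.
by rewrite linearZ /= g_sym.
Qed.

Lemma g_p10_p01 X Y : g (P10 X) (P01 Y) = \sum_t g X (Zb t) * g (Z t) Y.
Proof.
rewrite p10_frame linear_sumlz; apply: eq_bigr => t _.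
by rewrite linearZl_LR /= (g_p01r _ (Z_is10 t)).
Qed.

Lemma ginv_unitary : ginv G Z = 1%:M.
Proof.
rewrite /ginv (_ : gmat G Z = 1%:M) ?invmx1 //.
by apply/matrixP => s t; rewrite !mxE Z_unitary.
Qed.

Lemma g_nabla_skew X Y W : g (nab X Y) W = - g Y (nab X W).
Proof. by apply/eqP; rewrite -addr_eq0 nabla_metric. Qed.

Lemma nabla_is10 X {Y} : is10 Y -> is10 (nab X Y).
Proof. by move=> Y10; rewrite /is10 -nabla_JJ Y10 linearZr_LR. Qed.

Lemma nabla_is01 X {Y} : is01 Y -> is01 (nab X Y).
Proof. by move=> Y01; rewrite /is01 -nabla_JJ Y01 linearZr_LR. Qed.

Lemma torsion_10_01_eq0 {Y W} : is10 Y -> is01 W -> nab Y W - nab W Y - mu Y W = 0.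
Proof. by move=> Y10 W01; have := torsion_10_01 Y W; rewrite (p10_id Y10) (p01_id W01). Qed.

Lemma nabla_01_10 {W Y} : is01 W -> is10 Y -> nab W Y = P10 (mu W Y).
Proof.
move=> W01 Y10; have := congr1 P10 (torsion_10_01_eq0 Y10 W01).
rewrite !linearB /= (p10_eq0 (nabla_is01 Y W01)) (p10_id (nabla_is10 W Y10)).
rewrite mu_antisym linearN /= linear0 sub0r opprK addrC.
by move=> /eqP; rewrite subr_eq0 => /eqP ->.
Qed.

Lemma nabla_10_01 {Y W} : is10 Y -> is01 W -> nab Y W = P01 (mu Y W).
Proof.
move=> Y10 W01; have := congr1 P01 (torsion_10_01_eq0 Y10 W01).
rewrite !linearB /= (p01_id (nabla_is01 Y W01)) (p01_eq0 (nabla_is10 W Y10)).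
by rewrite subr0 linear0 => /eqP; rewrite subr_eq0 => /eqP.
Qed.

Lemma mu_p10_bracket_l X Y W : mu (P10 (mu X Y)) W = 0.
Proof.
rewrite /p10 !linearZl_LR linearBl linearZl_LR /= mu_bracket_l mu_JJ_bracket_l.
by rewrite scaler0 subr0 scaler0.
Qed.

Lemma mu_p01_bracket_l X Y W : mu (P01 (mu X Y)) W = 0.
Proof.
rewrite /p01 !linearZl_LR linearDl linearZl_LR /= mu_bracket_l mu_JJ_bracket_l.
by rewrite scaler0 addr0 scaler0.
Qed.

Lemma mu_p10_bracket_r X Y W : mu W (P10 (mu X Y)) = 0.
Proof. by rewrite mu_antisym mu_p10_bracket_l oppr0. Qed.

Lemma mu_p01_bracket_r X Y W : mu W (P01 (mu X Y)) = 0.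
Proof. by rewrite mu_antisym mu_p01_bracket_l oppr0. Qed.

Lemma g_nabla_bracket X Y {U W} : is10 U -> is01 W -> g (nab (mu X Y) U) W = 0.
Proof.
move=> U10 W01.
have -> : nab (mu X Y) U = nab (P10 (mu X Y)) U + nab (P01 (mu X Y)) U.
  by rewrite -linearDl p10_add_p01.
rewrite (nabla_01_10 (p01_is01 (mu X Y)) U10) mu_p01_bracket_l linear0 addr0.
rewrite g_nabla_skew (nabla_10_01 (p10_is10 (mu X Y)) W01) mu_p10_bracket_l.
by rewrite linear0 linear0r oppr0.
Qed.

Section Components.
Variables j k : 'I_n.

Let cA r p := g (Z p) (mu (Z r) (Zb k)).
Let cAb r p := g (Zb p) (mu (Zb r) (Z j)).
Let cB r p := g (mu (Z r) (Z p)) (Zb k).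
Let cBb r p := g (mu (Zb r) (Zb p)) (Z j).

Lemma Tlow_frame s q : Tlow c Gam G Z s q k = cA q s - cA s q - cB s q.
Proof.
rewrite /Tlow /torsionC !linearBl /= !g_nabla_skew.
rewrite (nabla_10_01 (Z_is10 s) (Zb_is01 k)) (nabla_10_01 (Z_is10 q) (Zb_is01 k)).
by rewrite (g_p01r _ (Z_is10 s)) (g_p01r _ (Z_is10 q)) opprK [- _ + _]addrC.
Qed.

Lemma Tlowbar_frame r p : Tlowbar c Gam G Z r p j = cAb p r - cAb r p - cBb r p.
Proof.
rewrite /Tlowbar /torsionC !linearBl /= !g_nabla_skew.
rewrite (nabla_01_10 (Zb_is01 r) (Z_is10 j)) (nabla_01_10 (Zb_is01 p) (Z_is10 j)).
by rewrite (g_p10r _ (Zb_is01 r)) (g_p10r _ (Zb_is01 p)) opprK [- _ + _]addrC.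
Qed.

Lemma OmegaC_frame r : OmegaC c Gam G Z r r j k =
  \sum_t (g (Z j) (mu (Z r) (Zb t)) * g (mu (Zb r) (Z t)) (Zb k) - cAb r t * cA r t).
Proof.
rewrite /OmegaC /curvC !linearBl /= (g_nabla_bracket _ _ (Z_is10 j) (Zb_is01 k)) subr0.
rewrite (g_nabla_skew (Z r)) (nabla_01_10 (Zb_is01 r) (Z_is10 j)).
rewrite (nabla_10_01 (Z_is10 r) (Zb_is01 k)) g_p10_p01.
rewrite (nabla_01_10 (Zb_is01 r) (nabla_is10 _ (Z_is10 j))) (g_p10l _ (Zb_is01 k)).
rewrite -(p10_id (nabla_is10 (Z r) (Z_is10 j))) p10_frame linear_sumr linear_sumlz /=.
rewrite -sumrN -sumrB; apply: eq_bigr => t _.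
rewrite linearZr_LR linearZl_LR /= g_nabla_skew (nabla_10_01 (Z_is10 r) (Zb_is01 t)).
by rewrite (g_p01r _ (Z_is10 j)) [g (mu _ _) (Zb t)]g_sym mulNr opprK addrC.
Qed.

Lemma S_chern_frame : S_chern c Gam G Z j k =
  \sum_r \sum_t (g (Z j) (mu (Z r) (Zb t)) * g (mu (Zb r) (Z t)) (Zb k) - cAb r t * cA r t).
Proof.
rewrite /S_chern ginv_unitary; apply: eq_bigr => r _.
by rewrite (sum_mx1_mul (fun s => OmegaC c Gam G Z s r j k)) OmegaC_frame.
Qed.

Lemma Q2_frame : Q2 c Gam G Z j k =
  (\sum_r \sum_p cA r p * cAb r p) *+ 2 + \sum_r \sum_p cB r p * cBb r p.
Proof.
transitivity (\sum_r \sum_p Tlow c Gam G Z r p k * Tlowbar c Gam G Z r p j).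
  rewrite /Q2 ginv_unitary [RHS]exchange_big; apply: eq_bigr => p _.
  apply: etrans
    (sum_mx1_mul (fun q => \sum_r Tlow c Gam G Z r q k * Tlowbar c Gam G Z r p j) p).
  apply: eq_bigr => q _; rewrite mulr_sumr; apply: eq_bigr => r _.
  apply: etrans (sum_mx1_mul (fun s =>
    1%:M p q * (Tlow c Gam G Z s q k * Tlowbar c Gam G Z r p j)) r).
  by apply: eq_bigr => s _; rewrite mulrCA !mulrA.
under eq_bigr do under eq_bigr do rewrite Tlow_frame Tlowbar_frame.
(* Each cross term contracts, through the frame expansion, a type component
   of a bracket (which is central) against a bracket. *)
apply: sum_torsion_square.
- rewrite exchange_big big1 // => p _.
  apply: (contract01_eq0 (fun v => g (Zb p) (mu v (Z j)))) => [a u v /=|].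
    by rewrite linearPl linearPr.
  by rewrite /= mu_p01_bracket_l linear0r.
- rewrite exchange_big big1 // => p _.
  apply: (contract01_eq0 (fun v => g (mu v (Zb p)) (Z j))) => [a u v /=|].
    by rewrite !linearPl.
  by rewrite /= mu_p01_bracket_l linear0l.
- apply: big1 => r _.
  apply: (contract01_eq0 (fun v => g (mu (Zb r) v) (Z j))) => [a u v /=|].
    by rewrite linearPr linearPl.
  by rewrite /= mu_p01_bracket_r linear0l.
- rewrite exchange_big big1 // => p _.
  apply: (contract10_eq0 (fun v => g (mu v (Z p)) (Zb k))) => [a u v /=|].
    by rewrite !linearPl.
  by rewrite /= mu_p10_bracket_l linear0l.
- apply: big1 => r _.
  apply: (contract10_eq0 (fun v => g (mu (Z r) v) (Zb k))) => [a u v /=|].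
    by rewrite linearPr linearPl.
  by rewrite /= mu_p10_bracket_r linear0l.
Qed.

Lemma Theta_frame : Theta c Gam G Z j k =
  \sum_(r < n) \sum_(s < n)
     (g (P01 (mu (Z s) (Zb r))) (Z j) * g (P10 (mu (Zb s) (Z r))) (Zb k)
      + 2^-1 * (g (mu (Zb s) (Zb r)) (Z j) * g (mu (Z s) (Z r)) (Zb k))).
Proof.
have half_twice (x : C) : 2^-1 * (x *+ 2) = x.
  by rewrite -(mulr_natr x 2) mulrCA mulVf ?pnatr_eq0 // mulr1.
rewrite /Theta S_chern_frame Q2_frame mulrDr half_twice.
rewrite [RHS]exchange_big mulr_sumr addrA -!big_split /=; apply: eq_bigr => r _.
rewrite mulr_sumr -!big_split /=; apply: eq_bigr => s _.
rewrite [cAb _ _ * _]mulrC subrK [cB _ _ * _]mulrC.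
by rewrite (g_p01l _ (Z_is10 j)) (g_p10l _ (Zb_is01 k)) [g (mu _ _) (Z j)]g_sym.
Qed.

End Components.

End ChernFrame.

Theorem proposition2p1 (R : rcfType) (n : nat)
    (c : 'I_n.*2 -> 'I_n.*2 -> 'rV[R]_n.*2) (J G : 'M[R]_n.*2)
    (Gam : 'I_n.*2 -> 'I_n.*2 -> 'rV[R]_n.*2)
    (Z : 'I_n -> 'rV[R[i]]_n.*2) :
  is_lie_bracket c -> two_step_nilpotent c ->
  is_complex_structure c J -> is_hermitian_metric J G ->
  (forall x y, in_center c (actJ J (bil c x y))) ->
  is_chern_connection c Gam J G ->
  is_10_frame J Z -> is_unitary_frame G Z ->
  forall j k : 'I_n,
    Theta c Gam G Z j k =
      \sum_(r < n) \sum_(s < n)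
         (gC G (p01 J (muC c (Z s) (conjv (Z r)))) (Z j)
          * gC G (p10 J (muC c (conjv (Z s)) (Z r))) (conjv (Z k))
        + 2^-1 * (gC G (muC c (conjv (Z s)) (conjv (Z r))) (Z j)
                  * gC G (muC c (Z s) (Z r)) (conjv (Z k)))).
Proof.
move=> [anti _] [nil _] [J_sqr _] [symG [_ GJ]] cen [met [GamJ tor]] Z10 Zunit j k.
apply: Theta_frame => //.
- exact: muC_antisym.
- exact: muC_bracket_l.
- exact: muC_JC_bracket_l.
- exact: JC_sqr.
- exact: gC_sym.
- exact: gC_JC.
- exact: nablaC_metric.
- exact: nablaC_JC.
Qed.
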